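(* Let $Q=\prod_{n\in\mathbb{Z}}[0,1]$ with the metric $D(\hat t,\hat s)=\sum_{n\in\mathbb{Z}}|t_n-s_n|/2^{|n|}$ and let $\sigma:Q\to Q$ be the shift map. Let $a=(\dots,0,0,0,\dots)$ and, for $n\in\mathbb{Z}$ and $p\in\{1,2,\dots\}$, let $b^p_n\in Q$ be the sequence whose $n$-th coordinate is $1/p$ and all other coordinates are $0$. Let $S_Q=\{a\}\cup\{b^p_n: n\in\mathbb{Z},\ p\ge 1\}$ (a closed $\sigma$-invariant subset) and $\sigma_{S_Q}=\sigma|_{S_Q}$. Then $h(\sigma_{S_Q})=0$ but $h(2^{\sigma_{S_Q}})=\infty$.
   Context: $2^{S_Q}$ is the hyperspace of nonempty closed subsets of $S_Q$ with the Hausdorff metric and $2^{\sigma_{S_Q}}(A)=\sigma(A)$. $h$ denotes topological entropy. *)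

From Stdlib Require List.
From HB Require Import structures.
From mathcomp Require Import all_boot all_order all_algebra.
From mathcomp Require Import all_classical all_reals all_analysis.
Set Implicit Arguments. Unset Strict Implicit. Unset Printing Implicit Defensive.
Import Order.TTheory GRing.Theory Num.Theory.
Import numFieldNormedType.Exports.
Local Open Scope classical_set_scope.
Local Open Scope ring_scope.

Section Entropy.
Variables (R : realType) (T : Type).

Definition separated (X : set T) (d : T -> T -> R) (f : T -> T)
    (n : nat) (eps : R) (E : seq T) : Prop :=
  List.NoDup E /\ (forall x, List.In x E -> X x) /\
  (forall x y, List.In x E -> List.In y E -> x <> y ->
     exists2 i : nat, (i < n)%N & eps < d (iter i f x) (iter i f y)).

Definition sep_number (X : set T) (d : T -> T -> R) (f : T -> T)
    (n : nat) (eps : R) : \bar R :=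
  ereal_sup [set ((size E)%:R)%:E | E in separated X d f n eps].

Definition growth_term (X : set T) (d : T -> T -> R) (f : T -> T)
    (eps : R) (n : nat) : \bar R :=
  match sep_number X d f n eps with
  | EFin r => (ln r / n%:R)%:E
  | _ => +oo%E
  end.

Definition top_entropy (X : set T) (d : T -> T -> R) (f : T -> T) : \bar R :=
  ereal_sup [set limn_esup (growth_term X d f eps) | eps in [set e : R | 0 < e]].

Definition closed_in (X : set T) (d : T -> T -> R) (A : set T) : Prop :=
  A `<=` X /\
  forall x, X x -> (forall e : R, 0 < e -> exists2 y, A y & d x y < e) -> A x.

Definition hausdorff (d : T -> T -> R) (A B : set T) : R :=
  fine (maxe
    (ereal_sup [set ereal_inf [set (d a b)%:E | b in B] | a in A])
    (ereal_sup [set ereal_inf [set (d a b)%:E | a in A] | b in B])).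

Definition hyperspace (X : set T) (d : T -> T -> R) : set (set T) :=
  [set A | closed_in X d A /\ A !=set0].

End Entropy.

Section Hilbert.
Variable R : realType.

Definition Qspace : set (int -> R) := [set t | forall n, 0 <= t n <= 1].

Definition Dmetric (t s : int -> R) : R :=
  fine (\esum_(n in [set: int]) (`|t n - s n| / 2 ^+ `|n|%N)%:E).

Definition Qshift (t : int -> R) : int -> R := fun n => t (n + 1).

Definition pt_a : int -> R := fun _ => 0.

Definition pt_b (p : nat) (n : int) : int -> R :=
  fun m => if m == n then p%:R^-1 else 0.

Definition S_Q : set (int -> R) :=
  [set pt_a] `|` [set x | exists (n : int) (p : nat), (0 < p)%N /\ x = pt_b p n].

End Hilbert.

(* Under the shift, [b^p_n] walks to coordinates [n - i] and its distance to
   the fixed point [a] is [1 / (p 2^|n - i|)].  Given [eps], only the points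
   [b^p_m] with [p < M ~ 2/eps] and [-M < m < n + M] leave the [eps/2]-ball
   around [a] during the first [n] steps; all other points of [S_Q] stay
   [eps]-close to each other, so an [(n, eps)]-separated set has at most
   [1 + M (n + 2M)] elements and [h(sigma_{S_Q}) = 0].
   In the hyperspace, each word [w] of length [n] over [k + 1] letters gives
   the finite closed set [{b^{w_j + 1}_j | j < n}].  Two words differing at
   [j] give sets that, after [j] shifts, carry different masses at
   coordinate [0], hence are [1/(k+1)^2]-apart in the Hausdorff metric.  The
   [(k+1)^n] word sets are thus separated, so the entropy is at least
   [log (k + 1)] for every [k]. *)

From Pilot Require Import Defs.
From HB Require Import structures.
From mathcomp Require Import all_boot all_order all_algebra.
From mathcomp Require Import all_classical all_reals all_analysis.
From mathcomp Require Import zify ring lra.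
Set Implicit Arguments. Unset Strict Implicit. Unset Printing Implicit Defensive.
Import Order.TTheory GRing.Theory Num.Theory.
Local Open Scope classical_set_scope.
Local Open Scope ring_scope.

Lemma InP (T : eqType) (x : T) (s : seq T) : reflect (List.In x s) (x \in s).
Proof.
elim: s => [|y s IH] /=; first by constructor.
rewrite inE; apply: (iffP orP) => [[/eqP->|/IH]|[->|/IH]]; by [left|right].
Qed.

Lemma NoDupP (T : eqType) (s : seq T) : reflect (List.NoDup s) (uniq s).
Proof.
elim: s => [|x s IH] /=; first by do 2 constructor.
by apply: (iffP andP) => [[/InP xNs /IH]|/List.NoDup_cons_iff[/InP xNs /IH]] //;
  constructor.
Qed.

Lemma NoDup_size_le_card (T : eqType) (C : finType) (E : seq T)
    (code : T -> C -> Prop) :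
  List.NoDup E -> (forall x, x \in E -> exists c, code x c) ->
  (forall x y c, x \in E -> y \in E -> code x c -> code y c -> x = y) ->
  (size E <= #|C|)%N.
Proof.
case: E => [//|x0 E] /NoDupP uniqE codeE code_inj.
have [c0 _] := codeE x0 (mem_head _ _).
have /choice[c Hc] : forall x, exists c, x \in x0 :: E -> code x c.
  by move=> x; have [/codeE[c ?]|_] := boolP (x \in x0 :: E); [exists c|exists c0].
rewrite -(size_map c) -(card_uniqP _) ?max_card // map_inj_in_uniq // => x y xE yE cxy.
by apply: (code_inj x y (c x)) => //; [|rewrite cxy]; apply: Hc.
Qed.

Section Limsup.
Variable R : realType.
Implicit Type u : (\bar R)^nat.

Lemma limn_esup_ge_eventually u c N :
  (forall n, (N <= n)%N -> (c <= u n)%E) -> (c <= limn_esup u)%E.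
Proof.
move=> uc; apply: le_ereal_inf_tmp => _ [V [M _ VM] <-].
apply: le_trans (uc (maxn N M) (leq_maxl _ _)) _.
by apply: ereal_sup_ubound; exists (maxn N M) => //; apply: VM; rewrite /= leq_maxr.
Qed.

Lemma limn_esup_eq0 u : (forall n, (0 <= u n)%E) ->
  (forall e : R, 0 < e -> exists N, forall n, (N <= n)%N -> (u n <= e%:E)%E) ->
  limn_esup u = 0%E.
Proof.
move=> u0 ule; apply/eqP.
rewrite eq_le (limn_esup_ge_eventually (N := 0%N) (fun n _ => u0 n)) andbT.
apply/lee_addgt0Pr => e e0; rewrite add0e; have [N uNe] := ule e e0.
apply: le_trans (ereal_inf_lbound _) _.
  by exists [set n | (N <= n)%N]; [exists N|].
by apply: ge_ereal_sup => _ [n Nn <-]; exact: uNe.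
Qed.

End Limsup.

Lemma ln_linear_le_eventually (R : realType) (C : nat) (e : R) : 0 < e ->
  exists N, forall m, (N <= m)%N -> ln ((C.+1 * m.+1)%N%:R) <= e * m%:R.
Proof.
move=> e0; set K := 4 * C.+1%:R / e ^+ 2.
have K0 : 0 <= K by rewrite divr_ge0 ?mulr_ge0 ?exprn_ge0 ?ltW.
exists (Num.Def.archi_bound K).+1 => m Nm.
have Km : K < m%:R.
  by apply: lt_le_trans (archi_boundP K0) _; rewrite ler_nat ltnW.
have m1 : (1 : R) <= m%:R by rewrite ler1n; apply: leq_trans Nm.
have em0 : 0 <= e * m%:R by rewrite mulr_ge0 // ltW.
rewrite -(expRK (e * m%:R)) ler_ln ?posrE ?expR_gt0 ?ltr0n ?muln_gt0 //.
(* [exp x >= 1 + x^2/2], and [C (m + 1) <= (e m)^2 / 2] once [m > K]. *)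
apply: le_trans (expR_ge1Dxn 1 em0).
have Ce : 4 * C.+1%:R <= e ^+ 2 * m%:R.
  by move: (ltW Km); rewrite /K ler_pdivrMr ?exprn_gt0 // [m%:R * _]mulrC.
rewrite natrM -addn1 natrD exprMn -[2`!%:R]/2.
have C1 : (1 : R) <= C.+1%:R by rewrite ler1n.
nra.
Qed.

Section TopEntropy.
Variables (R : realType) (T : Type) (X : set T) (d : T -> T -> R) (f : T -> T).

Lemma growth_term_ge_ln eps (k n : nat) : (0 < k)%N -> (0 < n)%N ->
  (((k ^ n)%N%:R)%:E <= sep_number X d f n eps)%E ->
  ((ln k%:R)%:E <= growth_term X d f eps n)%E.
Proof.
rewrite /growth_term => k0 n0.
case: sep_number => [r| |] //=; last by move=> _; rewrite leey.
rewrite !lee_fin => kr.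
have r0 : 0 < r by apply: lt_le_trans kr; rewrite ltr0n expn_gt0 k0.
rewrite ler_pdivlMr ?ltr0n // mulr_natr -lnXn ?ltr0n // -natrX.
by rewrite ler_ln ?posrE ?ltr0n ?expn_gt0 ?k0.
Qed.

Lemma top_entropy_eq_pinfty :
  (forall k : nat, exists2 eps : R, 0 < eps & forall n, (0 < n)%N ->
     (((k.+1 ^ n)%N%:R)%:E <= sep_number X d f n eps)%E) ->
  top_entropy X d f = +oo%E.
Proof.
move=> sepk; apply: eq_infty => r.
set k := Num.Def.archi_bound (expR r).
have [eps eps0 sepk_eps] := sepk k.
have r_le : r <= ln k.+1%:R.
  rewrite -{1}(expRK r) ler_ln ?posrE ?expR_gt0 ?ltr0n //.
  by apply: le_trans (ltW (archi_boundP (expR_ge0 r))) _; rewrite ler_nat.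
apply: (@le_trans _ _ (ln k.+1%:R)%:E); first by rewrite lee_fin.
apply: (@le_trans _ _ (limn_esup (growth_term X d f eps))).
  apply: (limn_esup_ge_eventually (N := 1%N)) => n n1.
  exact: (growth_term_ge_ln (ltn0Sn k) n1 (sepk_eps n n1)).
by apply: ereal_sup_ubound; exists eps.
Qed.

Lemma top_entropy_eq0 :
  (forall eps, 0 < eps -> exists C : nat, forall n,
     exists2 r, sep_number X d f n eps = r%:E & 1 <= r <= (C * n.+1)%N%:R) ->
  top_entropy X d f = 0%E.
Proof.
move=> sep_lin.
have growth0 eps : 0 < eps -> limn_esup (growth_term X d f eps) = 0%E.
  move=> /sep_lin[C sepC]; apply: limn_esup_eq0.
    move=> n; rewrite /growth_term; have [r -> /andP[r1 _]] := sepC n.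
    by rewrite lee_fin divr_ge0 ?ln_ge0.
  move=> e e0; have [N lnN] := ln_linear_le_eventually C e0.
  exists N.+1 => n Nn; rewrite /growth_term; have [r -> /andP[r1 rC]] := sepC n.
  rewrite lee_fin ler_pdivrMr ?ltr0n 1?(leq_trans _ Nn) //.
  apply: le_trans (lnN n (ltnW Nn)).
  rewrite ler_ln ?posrE ?ltr0n ?muln_gt0 ?(lt_le_trans ltr01 r1) //.
  by apply: le_trans rC _; rewrite ler_nat leq_mul2r leqnSn orbT.
apply/eqP; rewrite eq_le; apply/andP; split.
  by apply: ge_ereal_sup => _ [e e0 <-]; rewrite growth0.
by apply: ereal_sup_ubound; exists 1; rewrite /= ?growth0 ?ltr01.
Qed.

End TopEntropy.

Section Hyperspace.
Variables (R : realType) (T : Type) (X : set T) (d : T -> T -> R).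

Lemma hausdorff_ge (A B : set T) (x0 y0 : T) (c M : R) :
  (forall x y, A x -> B y -> d x y <= M) -> A x0 -> B y0 -> 0 <= c ->
  (forall y, B y -> c <= d x0 y) -> c <= hausdorff d A B.
Proof.
move=> dM Ax0 By0 c0 cd; rewrite /hausdorff.
set s1 := ereal_sup _; set s2 := ereal_sup _.
have c_s1 : (c%:E <= s1)%E.
  apply: le_trans (ereal_sup_ubound _); last by exists x0.
  by apply: le_ereal_inf_tmp => _ [y By <-]; rewrite lee_fin cd.
have s1M : (s1 <= M%:E)%E.
  apply: ge_ereal_sup => _ [x Ax <-]; apply: le_trans (ereal_inf_lbound _) _.
    by exists y0.
  by rewrite lee_fin dM.
have s2M : (s2 <= M%:E)%E.
  apply: ge_ereal_sup => _ [y By <-]; apply: le_trans (ereal_inf_lbound _) _.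
    by exists x0.
  by rewrite lee_fin dM.
have c_max : (c%:E <= maxe s1 s2)%E by rewrite le_max c_s1.
have max_M : (maxe s1 s2 <= M%:E)%E by rewrite ge_max s1M s2M.
have max_fin : maxe s1 s2 \is a fin_num.
  by rewrite ge0_fin_numE ?(le_lt_trans max_M) ?ltry // (le_trans _ c_max) ?lee_fin.
by rewrite -lee_fin fineK.
Qed.

Lemma closed_in_range (I : finType) (g : I -> T) :
  (forall i, X (g i)) -> (forall x y, X x -> X y -> d x y <= 0 -> x = y) ->
  closed_in X d (range g).
Proof.
move=> Xg d_sep; split=> [_ [i _ <-] //|x Xx near_x].
apply: contrapT => x_notin.
have d_gt0 i : 0 < d x (g i).
  by rewrite ltNge; apply/negP => /(d_sep _ _ Xx (Xg i)) xg; apply: x_notin; exists i.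
have e_gt0 : 0 < \big[Order.min/(1 : R)]_i d x (g i) by apply: lt_bigmin => // i _.
have [_ [i _ <-]] := near_x _ e_gt0.
by rewrite ltNge bigmin_le.
Qed.

End Hyperspace.

Lemma iter_image (T : Type) (f : T -> T) (A : set T) (i : nat) :
  iter i (fun B => f @` B) A = iter i f @` A.
Proof.
elim: i => [|i IH] /=; first exact/esym/image_id.
by rewrite IH image_comp.
Qed.

Lemma inv_natr_dist_ge {R : realType} (p q : nat) :
  (0 < p)%N -> (0 < q)%N -> p != q ->
  (p * q)%N%:R^-1 <= `|p%:R^-1 - q%:R^-1| :> R.
Proof.
wlog pq : p q / (p < q)%N.
  move=> W p0 q0 npq; have [pq|qp|e] := ltngtP p q; first exact: W.
    by rewrite mulnC distrC W // eq_sym.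
  by rewrite e eqxx in npq.
move=> p0 q0 _; have p0' : (0 : R) < p%:R by rewrite ltr0n.
have q0' : (0 : R) < q%:R by rewrite ltr0n.
have pq' : (p%:R : R) + 1 <= q%:R by rewrite natr1 ler_nat.
have pq0 : (0 : R) < (p * q)%N%:R by rewrite ltr0n muln_gt0 p0.
have -> : (p%:R^-1 - q%:R^-1 : R) = (q%:R - p%:R) / (p * q)%N%:R.
  by rewrite natrM; field; rewrite !lt0r_neq0.
rewrite ger0_norm; last by rewrite divr_ge0 ?ltW //; lra.
rewrite ler_pdivlMr // mulVf ?lt0r_neq0 //; lra.
Qed.

Section HilbertCube.
Variable R : realType.
Local Notation a := (@pt_a R).
Local Notation b := (@pt_b R).
Local Notation D := (@Dmetric R).
Local Notation S := (@S_Q R).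
Local Notation sigma := (@Qshift R).

(* Relies on the convention [0^-1 = 0]. *)
Lemma pt_b0 n : b 0 n = a.
Proof. by apply/funext => m; rewrite /pt_b invr0; case: ifP. Qed.

Lemma S_Q_pt_b p n : S (b p n).
Proof. by case: p => [|p]; [left; exact: pt_b0|right; exists n, p.+1]. Qed.

Lemma S_QP x : S x -> exists p n, x = b p n.
Proof. by case=> [->|[n [p [_ ->]]]]; [exists 0%N, 0; rewrite pt_b0|exists p, n]. Qed.

Lemma pt_b_inj p q m n : (0 < p)%N -> b p m = b q n -> p = q /\ m = n.
Proof.
move=> p0 /(congr1 (fun x => x m)); rewrite /pt_b eqxx.
have [-> /invr_inj/eqP|_ /eqP] := eqVneq m n; first by rewrite eqr_nat => /eqP.
by rewrite invr_eq0 pnatr_eq0 (gtn_eqF p0).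
Qed.

Lemma esum_single (I : choiceType) (g : I -> R) m :
  (forall n, n != m -> g n = 0) -> 0 <= g m ->
  \esum_(n in [set: I]) (g n)%:E = (g m)%:E.
Proof.
move=> g0 gm0; rewrite -(@esum_set1 _ _ m (fun n => (g n)%:E)) ?lee_fin //.
rewrite [RHS]esum_mkcond; apply: eq_esum => n _.
have [->|nm] := eqVneq n m; first by rewrite mem_set.
by rewrite g0 // memNset // => /= /eqP; rewrite (negbTE nm).
Qed.

Lemma Dmetric_pt_b_same p q n :
  D (b p n) (b q n) = `|p%:R^-1 - q%:R^-1| / 2 ^+ `|n|%N.
Proof.
rewrite /Dmetric (@esum_single _ _ n) /pt_b ?eqxx // => m /negbTE ->.
by rewrite subr0 normr0 mul0r.
Qed.

Lemma Dmetric_pt_b_diff p q m n : m != n ->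
  D (b p m) (b q n) = p%:R^-1 / 2 ^+ `|m|%N + q%:R^-1 / 2 ^+ `|n|%N.
Proof.
move=> mn; pose e k (r : R) l := if l == k then r / 2 ^+ `|k|%N else 0.
rewrite /Dmetric.
rewrite (eq_esum (b := fun l => ((e m p%:R^-1 l)%:E + (e n q%:R^-1 l)%:E)%E)).
  rewrite esumD => [|l _|l _]; try by rewrite lee_fin /e; case: ifP.
  rewrite (@esum_single _ (e m _) m) ?(@esum_single _ (e n _) n) /e ?eqxx //.
  1,2: by move=> l /negbTE ->.
move=> l _; rewrite -EFinD /e /pt_b; congr EFin; have [->|lm] := eqVneq l m.
  by rewrite (negbTE mn) subr0 ger0_norm // addr0.
have [->|ln] := eqVneq l n; first by rewrite sub0r normrN ger0_norm // add0r.
by rewrite subr0 normr0 mul0r addr0.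
Qed.

Lemma Dmetric_pt_b_a p n : D (b p n) a = p%:R^-1 / 2 ^+ `|n|%N.
Proof. by rewrite -(pt_b0 n) Dmetric_pt_b_same invr0 subr0 ger0_norm. Qed.

Lemma Dmetric_S_Q_le x y : S x -> S y -> D x y <= D x a + D y a.
Proof.
move=> /S_QP[p [m ->]] /S_QP[q [n ->]]; rewrite !Dmetric_pt_b_a.
have [<-|mn] := eqVneq m n; last by rewrite Dmetric_pt_b_diff.
rewrite Dmetric_pt_b_same -mulrDl ler_wpM2r ?invr_ge0 ?exprn_ge0 //.
by rewrite (le_trans (ler_normB _ _)) // !ger0_norm.
Qed.

Lemma Dmetric_S_Q_le1 x : S x -> D x a <= 1.
Proof.
move=> /S_QP[p [n ->]]; rewrite Dmetric_pt_b_a ler_pdivrMr ?exprn_gt0 // mul1r.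
apply: le_trans (_ : 1 <= 2 ^+ `|n|%N); last by rewrite exprn_ege1 // ler1n.
by case: p => [|p]; rewrite ?invr0 // invf_le1 ?ltr0n // ler1n.
Qed.

Lemma Dmetric_S_Q_le2 x y : S x -> S y -> D x y <= 2.
Proof.
move=> Sx Sy; apply: le_trans (Dmetric_S_Q_le Sx Sy) _.
by rewrite -[2]/(1 + 1); apply: lerD; apply: Dmetric_S_Q_le1.
Qed.

Lemma Dmetric_S_Q_le0 x y : S x -> S y -> D x y <= 0 -> x = y.
Proof.
move=> /S_QP[p [m ->]] /S_QP[q [n ->]]; have [<-|mn] := eqVneq m n.
  rewrite Dmetric_pt_b_same pmulr_lle0 ?invr_gt0 ?exprn_gt0 // normr_le0 subr_eq0.
  by move=> /eqP/invr_inj/eqP; rewrite eqr_nat => /eqP ->.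
rewrite Dmetric_pt_b_diff // => D0.
have /eqP : p%:R^-1 / 2 ^+ `|m|%N + q%:R^-1 / 2 ^+ `|n|%N = 0 :> R.
  by apply/le_anti; rewrite D0 addr_ge0.
rewrite paddr_eq0 ?divr_ge0 // !mulf_eq0 !invr_eq0 !expf_eq0 !pnatr_eq0.
by rewrite -[(2 == 0)%N]/false !andbF !orbF => /andP[/eqP-> /eqP->]; rewrite !pt_b0.
Qed.

Lemma iter_Qshift_pt_b i p n : iter i sigma (b p n) = b p (n - i%:Z).
Proof.
elim: i => [|i IH]; first by rewrite subr0.
rewrite iterS IH; apply/funext => m; rewrite /Qshift /pt_b.
by congr (if _ then _ else _); apply/eqP/eqP; lia.
Qed.

Lemma S_Q_iter i x : S x -> S (iter i sigma x).
Proof. by move=> /S_QP[p [n ->]]; rewrite iter_Qshift_pt_b; exact: S_Q_pt_b. Qed.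

End HilbertCube.

Section HyperspaceEntropy.
Variable R : realType.
Local Notation b := (@pt_b R).
Local Notation D := (@Dmetric R).
Local Notation S := (@S_Q R).
Local Notation sigma := (@Qshift R).
Local Notation sigma_hyper := (fun A : set (int -> R) => sigma @` A).

Definition word_set n k (w : {ffun 'I_n -> 'I_k.+1}) : set (int -> R) :=
  range (fun j : 'I_n => b (w j).+1 j).

Lemma word_set_inj n k : injective (@word_set n k).
Proof.
move=> w w' ww'; apply/ffunP => j.
have [l _ /pt_b_inj[//|wl [lj]]] : word_set w' (b (w j).+1 j) by rewrite -ww'; exists j.
by move: wl; rewrite (ord_inj lj) => -[/val_inj ->].
Qed.

Lemma word_set_hyperspace n k (w : {ffun 'I_n -> 'I_k.+1}) : (0 < n)%N ->
  hyperspace S D (word_set w).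
Proof.
move=> n0; split; last by exists (b (w (Ordinal n0)).+1 0); exists (Ordinal n0).
by apply: closed_in_range => [j|]; [exact: S_Q_pt_b|exact: Dmetric_S_Q_le0].
Qed.

Lemma iter_word_set n k (w : {ffun 'I_n -> 'I_k.+1}) i :
  iter i sigma_hyper (word_set w) = range (fun j : 'I_n => b (w j).+1 (j%:Z - i%:Z)).
Proof.
rewrite iter_image image_comp; congr image; apply/funext => j /=.
exact: iter_Qshift_pt_b.
Qed.

Lemma word_set_separated n k (w w' : {ffun 'I_n -> 'I_k.+1}) (j : 'I_n) :
  w j != w' j ->
  (k.+1 ^ 2)%N%:R^-1 <= hausdorff D (iter j sigma_hyper (word_set w))
                                     (iter j sigma_hyper (word_set w')).
Proof.
move=> ww'; rewrite !iter_word_set.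
have k2_le (i : 'I_k.+1) : (k.+1 ^ 2)%N%:R^-1 <= i.+1%:R^-1 :> R.
  rewrite lef_pV2 ?posrE ?ltr0n ?expn_gt0 // ler_nat.
  by rewrite (leq_trans (ltn_ord i)) // expnS expn1 leq_pmulr.
apply: (hausdorff_ge (x0 := b (w j).+1 0) (y0 := b (w' j).+1 0) (M := 2)).
- by move=> _ _ [l _ <-] [l' _ <-]; apply: Dmetric_S_Q_le2; apply: S_Q_pt_b.
- by exists j; rewrite ?subrr.
- by exists j; rewrite ?subrr.
- by rewrite invr_ge0.
move=> _ [l _ <-]; have [lj|lj] := eqVneq (l%:Z - j%:Z) 0.
  have -> : l = j by apply: val_inj; move/eqP: lj; rewrite subr_eq0 => /eqP [].
  rewrite subrr Dmetric_pt_b_same expr0 divr1.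
  apply: le_trans _ (inv_natr_dist_ge (ltn0Sn _) (ltn0Sn _) _); last by rewrite eqSS.
  by rewrite lef_pV2 ?posrE ?ltr0n ?muln_gt0 ?expn_gt0 // ler_nat expnS expn1 leq_mul.
rewrite Dmetric_pt_b_diff 1?eq_sym // expr0 divr1.
by rewrite ler_wpDr ?divr_ge0 //; exact: k2_le.
Qed.

Lemma sep_number_hyperspace_ge n k : (0 < n)%N ->
  (((k.+1 ^ n)%N%:R)%:E <=
    sep_number (hyperspace S D) (hausdorff D) sigma_hyper n ((k.+1 ^ 2)%N%:R^-1 / 2))%E.
Proof.
move=> n0; apply: ereal_sup_ubound.
exists (map (@word_set n k) (enum {ffun 'I_n -> 'I_k.+1})); last first.
  by rewrite size_map -cardE card_ffun !card_ord.
split; first by apply/NoDupP; rewrite map_inj_uniq ?enum_uniq //; exact: word_set_inj.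
split=> [_ /List.in_map_iff[w [<- _]]|]; first exact: word_set_hyperspace.
move=> _ _ /List.in_map_iff[w [<- _]] /List.in_map_iff[w' [<- _]] ww'.
have /existsNP[j /eqP wj] : ~ forall j, w j = w' j.
  by move=> ww; apply: ww'; congr word_set; apply/ffunP.
exists j => //; apply: lt_le_trans (word_set_separated wj).
have : (0 : R) < (k.+1 ^ 2)%N%:R^-1 by rewrite invr_gt0 ltr0n expn_gt0.
by move: (_^-1) => c; lra.
Qed.

Lemma top_entropy_hyperspace_S_Q :
  top_entropy (hyperspace S D) (hausdorff D) sigma_hyper = +oo%E.
Proof.
apply: top_entropy_eq_pinfty => k; exists ((k.+1 ^ 2)%N%:R^-1 / 2).
  by rewrite divr_gt0 // invr_gt0 ltr0n expn_gt0.
move=> n n0; exact: sep_number_hyperspace_ge.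
Qed.

End HyperspaceEntropy.

Section ShiftEntropy.
Variables (R : realType) (eps : R).
Hypothesis eps_gt0 : 0 < eps.
Local Notation a := (@pt_a R).
Local Notation b := (@pt_b R).
Local Notation D := (@Dmetric R).
Local Notation S := (@S_Q R).
Local Notation sigma := (@Qshift R).

Let M := Num.Def.archi_bound (2 / eps).

Definition stays_near (n : nat) (x : int -> R) :=
  forall i, (i < n)%N -> D (iter i sigma x) a <= eps / 2.

Lemma stays_near_close n x y i : S x -> S y ->
  stays_near n x -> stays_near n y -> (i < n)%N ->
  D (iter i sigma x) (iter i sigma y) <= eps.
Proof.
move=> Sx Sy near_x near_y lt_in.
apply: le_trans (Dmetric_S_Q_le (S_Q_iter i Sx) (S_Q_iter i Sy)) _.
by have := near_x i lt_in; have := near_y i lt_in; lra.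
Qed.

Lemma not_stays_near n x : S x -> ~ stays_near n x ->
  exists (p : 'I_M) (j : 'I_(n + 2 * M)), x = b p (j%:Z - M%:Z).
Proof.
move=> /S_QP[p [m ->]] /existsNP[i /not_implyP[lt_in /negP]].
rewrite -ltNge iter_Qshift_pt_b Dmetric_pt_b_a; set d := `|m - i%:Z|%N.
rewrite -[2 ^+ d]natrX -invfM -natrM => far.
have pd_gt0 : (0 < p * 2 ^ d)%N.
  rewrite lt0n; apply: contraTneq far => ->; rewrite invr0 -leNgt.
  by rewrite divr_ge0 ?ltW.
have pd_lt : (p * 2 ^ d < M)%N.
  rewrite -(ltr_nat R); apply: lt_trans (archi_boundP _); last by rewrite divr_ge0 ?ltW.
  by move: far; rewrite -[eps / 2]invf_div ltf_pV2 ?posrE ?divr_gt0 ?ltr0n.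
have pM : (p < M)%N by apply: leq_ltn_trans pd_lt; rewrite leq_pmulr ?expn_gt0.
have dM : (d < M)%N.
  apply: ltn_trans (ltn_expl d (isT : (1 < 2)%N)) (leq_ltn_trans _ pd_lt).
  by rewrite leq_pmull //; move: pd_gt0; rewrite muln_gt0 => /andP[].
have jB : (`|(m + M%:Z)%R|%N < n + 2 * M)%N by rewrite /d in dM; lia.
by exists (Ordinal pM), (Ordinal jB); congr b; rewrite /=; lia.
Qed.

Lemma separated_S_Q_size n E : Defs.separated S D sigma n eps E ->
  (size E <= (M * (n + 2 * M)).+1)%N.
Proof.
move=> [nodupE [SE sepE]].
pose code x (c : option ('I_M * 'I_(n + 2 * M))) := if c is Some (p, j)
  then x = b p (j%:Z - M%:Z) else stays_near n x.
have -> : (M * (n + 2 * M)).+1 = #|{: option ('I_M * 'I_(n + 2 * M))}|.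
  by rewrite card_option card_prod !card_ord.
apply: (NoDup_size_le_card (code := code)) => //
  [x /InP xE|x y [[p j]|] /InP xE /InP yE].
- have [near_x|far_x] := pselect (stays_near n x); first by exists None.
  by have [p [j ->]] := not_stays_near (SE x xE) far_x; exists (Some (p, j)).
- by move=> /= -> ->.
move=> /= near_x near_y; apply: contrapT => xy.
have [i lt_in] := sepE x y xE yE xy.
by rewrite ltNge (stays_near_close (SE x xE) (SE y yE) near_x near_y lt_in).
Qed.

Lemma sep_number_S_Q_linear : exists C : nat, forall n,
  exists2 r, sep_number S D sigma n eps = r%:E & 1 <= r <= (C * n.+1)%N%:R.
Proof.
exists (M * (2 * M + 1)).+1 => n.
have lb : (1%:E <= sep_number S D sigma n eps)%E.
  apply: ereal_sup_ubound; exists [:: a] => //.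
  split; first by constructor; [|constructor].
  by split=> [x [<-|[]]|x y [<-|[]] [<-|[]]]; first by left.
have ub : (sep_number S D sigma n eps <= ((M * (2 * M + 1)).+1 * n.+1)%N%:R%:E)%E.
  apply: ge_ereal_sup => _ [E sepE <-]; rewrite lee_fin ler_nat.
  by apply: leq_trans (separated_S_Q_size sepE) _; nia.
move: lb ub; case: sep_number => [r| |] //= lb ub.
by exists r; rewrite -?lee_fin ?lb.
Qed.

End ShiftEntropy.

Lemma top_entropy_S_Q (R : realType) :
  top_entropy (@S_Q R) (@Dmetric R) (@Qshift R) = 0%E.
Proof. exact: top_entropy_eq0 (fun eps => @sep_number_S_Q_linear R eps). Qed.

Unset Implicit Arguments.

Theorem proposition5p10 (R : realType) :
  top_entropy (@S_Q R) (@Dmetric R) (@Qshift R) = 0%E /\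
  top_entropy (hyperspace (@S_Q R) (@Dmetric R))
    (hausdorff (@Dmetric R)) (fun A => (@Qshift R) @` A) = +oo%E.
Proof. by split; [exact: top_entropy_S_Q|exact: top_entropy_hyperspace_S_Q]. Qed.
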